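(* Let $A$ be a finite-dimensional vector space and define the bilinear form $\mathcal{B}$ on $A\oplus A^*$ by $\mathcal{B}(x+a^*,y+b^* )=\langle y,a^*\rangle-\langle x,b^*\rangle$. (a) If $(A,\bullet,\{\cdot,\cdot\})$ is a Poisson algebra, then $A\oplus A^*$ with $(x+a^* )\circ(y+b^* )=x\bullet y-L_\bullet^*(x)b^*$ and $[x+a^*,y+b^*]=\{x,y\}+\mathrm{ad}^*(x)b^*$, together with $\mathcal{B}$, is a quadratic dual pre-Poisson algebra. (b) If $(A,\circ,[\cdot,\cdot])$ is a dual pre-Poisson algebra, then $A\oplus A^*$ with $(x+a^* )\circ(y+b^* )=x\circ y-L_\circ^*(x)b^*+(-L_\circ^*+R_\circ^* )(y)a^*$ and $[x+a^*,y+b^*]=[x,y]+L_{[\cdot,\cdot]}^*(x)b^*-(L_{[\cdot,\cdot]}^*+R_{[\cdot,\cdot]}^* )(y)a^*$, together with $\mathcal{B}$, is a quadratic dual pre-Poisson algebra.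
   Context: Field $\mathbb{F}$ of characteristic $0$. $L_\diamond(x)y=x\diamond y$, $R_\diamond(x)y=y\diamond x$, $\mathrm{ad}(x)y=\{x,y\}$; for $f:A\to\mathrm{End}(V)$, $\langle f^*(x)v^*,u\rangle=-\langle v^*,f(x)u\rangle$. A Poisson algebra: $(A,\bullet)$ commutative associative, $(A,\{\cdot,\cdot\})$ Lie, $\{x,y\bullet z\}=\{x,y\}\bullet z+y\bullet\{x,z\}$. A dual pre-Poisson algebra: $x\circ(y\circ z)=(x\circ y)\circ z=(y\circ x)\circ z$; $[x,[y,z]]=[[x,y],z]+[y,[x,z]]$; $[x,y\circ z]=[x,y]\circ z+y\circ[x,z]$; $[x\circ y,z]=x\circ[y,z]+y\circ[x,z]$; $[x,y]\circ z=-[y,x]\circ z$. A quadratic dual pre-Poisson algebra is a dual pre-Poisson algebra with a nondegenerate skew-symmetric bilinear form $\mathcal{B}$ that is invariant: $\mathcal{B}(x\circ y,z)=\mathcal{B}(x,y\circ z-z\circ y)$ and $\mathcal{B}([x,y],z)=\mathcal{B}(x,[y,z]+[z,y])$ for all $x,y,z$. *)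

From HB Require Import structures.
From mathcomp Require Import all_boot all_order all_algebra.
Set Implicit Arguments. Unset Strict Implicit. Unset Printing Implicit Defensive.
Import GRing.Theory.
Local Open Scope ring_scope.

Definition bilinear_op (F : fieldType) (V : lmodType F) (op : V -> V -> V) :=
  (forall (a : F) (x y z : V), op (a *: x + y) z = a *: op x z + op y z) /\
  (forall (a : F) (x y z : V), op z (a *: x + y) = a *: op z x + op z y).

Definition bilinear_form (F : fieldType) (V : lmodType F) (B : V -> V -> F) :=
  (forall (a : F) (x y z : V), B (a *: x + y) z = a * B x z + B y z) /\
  (forall (a : F) (x y z : V), B z (a *: x + y) = a * B z x + B z y).

Definition is_poisson (F : fieldType) (V : lmodType F) (mul br : V -> V -> V) :=
  (bilinear_op mul /\ bilinear_op br /\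
      (forall x y z, mul x (mul y z) = mul (mul x y) z) /\
      (forall x y, mul x y = mul y x) /\
      (forall x y, br x y = - br y x) /\
      (forall x y z, br x (br y z) + br y (br z x) + br z (br x y) = 0)
    /\ (forall x y z, br x (mul y z) = mul (br x y) z + mul y (br x z))).

Definition is_dual_pre_poisson (F : fieldType) (V : lmodType F)
    (circ br : V -> V -> V) :=
  (bilinear_op circ /\ bilinear_op br /\
      (forall x y z, circ x (circ y z) = circ (circ x y) z /\
                     circ (circ x y) z = circ (circ y x) z) /\
      (forall x y z, br x (br y z) = br (br x y) z + br y (br x z)) /\
      (forall x y z, br x (circ y z) = circ (br x y) z + circ y (br x z)) /\
      (forall x y z, br (circ x y) z = circ x (br y z) + circ y (br x z))
    /\ (forall x y z, circ (br x y) z = - circ (br y x) z)).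

Definition is_quadratic_dpp (F : fieldType) (V : lmodType F)
    (circ br : V -> V -> V) (B : V -> V -> F) :=
  (is_dual_pre_poisson circ br /\ bilinear_form B /\
      (forall x y, B x y = - B y x) /\
      (forall x, (forall y, B x y = 0) -> x = 0) /\
      (forall x y z, B (circ x y) z = B x (circ y z - circ z y))
    /\ (forall x y z, B (br x y) z = B x (br y z + br z y))).

Notation dualsp F A := ('Hom(A, F^o)) (only parsing).

(* Dual map: < f^*(x) a, u > = - < a, f(x) u >. *)
Definition dualop (F : fieldType) (A : vectType F) (f : A -> A)
    (a : dualsp F A) : dualsp F A :=
  linfun (fun u : A => - a (f u)).

Definition Bform (F : fieldType) (A : vectType F)
    (p q : (A * dualsp F A)%type) : F :=
  p.2 q.1 - q.2 p.1.

Definition circ_a (F : fieldType) (A : vectType F) (mul br : A -> A -> A)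
    (p q : (A * dualsp F A)%type) : (A * dualsp F A)%type :=
  (mul p.1 q.1, - dualop (mul p.1) q.2).
Definition br_a (F : fieldType) (A : vectType F) (mul br : A -> A -> A)
    (p q : (A * dualsp F A)%type) : (A * dualsp F A)%type :=
  (br p.1 q.1, dualop (br p.1) q.2).

Definition circ_b (F : fieldType) (A : vectType F) (circ br : A -> A -> A)
    (p q : (A * dualsp F A)%type) : (A * dualsp F A)%type :=
  (circ p.1 q.1,
   - dualop (circ p.1) q.2
   + (- dualop (circ q.1) p.2 + dualop (fun u => circ u q.1) p.2)).
Definition br_b (F : fieldType) (A : vectType F) (circ br : A -> A -> A)
    (p q : (A * dualsp F A)%type) : (A * dualsp F A)%type :=
  (br p.1 q.1,
   dualop (br p.1) q.2
   - (dualop (br q.1) p.2 + dualop (fun u => br u q.1) p.2)).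

From HB Require Import structures.
From mathcomp Require Import all_boot all_order all_algebra.
From mathcomp Require Import ring.

(* Pairing the A^*-component of an identity on A + A^* with u in A turns it
   into a linear combination of a, b, c (the A^*-parts of the arguments)
   evaluated at elements of A, and each coefficient identity is an identity
   of the dual pre-Poisson algebra A.  Invariance of B is a direct
   computation, and B is nondegenerate because A^* separates the points of A.
   Part (a) reduces to part (b): a Poisson algebra is a dual pre-Poisson
   algebra, and when the product is commutative and the bracket skew, the
   extra terms -L^* + R^* and L^* + R^* of (b) vanish. *)

Set Implicit Arguments. Unset Strict Implicit.
Import GRing.Theory.
Local Open Scope ring_scope.

Section BilinearOp.
Variables (F : fieldType) (V : lmodType F) (op : V -> V -> V).
Hypothesis op_bilinear : bilinear_op op.

Lemma bilinear_op_linl z : linear (op^~ z).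
Proof. by move=> k x y; apply: op_bilinear.1. Qed.

Lemma bilinear_op_linr z : linear (op z).
Proof. by move=> k x y; apply: op_bilinear.2. Qed.

Let opl z : {linear V -> V} :=
  HB.pack (op^~ z) (GRing.isLinear.Build F V V *:%R _ (bilinear_op_linl z)).
Let opr z : {linear V -> V} :=
  HB.pack (op z) (GRing.isLinear.Build F V V *:%R _ (bilinear_op_linr z)).

Lemma bilinear_opDl z : {morph op^~ z : x y / x + y}.
Proof. exact: raddfD (opl z). Qed.
Lemma bilinear_opDr z : {morph op z : x y / x + y}.
Proof. exact: raddfD (opr z). Qed.
Lemma bilinear_opNl z : {morph op^~ z : x / - x}.
Proof. exact: raddfN (opl z). Qed.
Lemma bilinear_opNr z : {morph op z : x / - x}.
Proof. exact: raddfN (opr z). Qed.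
Lemma bilinear_opBl z : {morph op^~ z : x y / x - y}.
Proof. exact: raddfB (opl z). Qed.
Lemma bilinear_opBr z : {morph op z : x y / x - y}.
Proof. exact: raddfB (opr z). Qed.
Lemma bilinear_opZl z k : {morph op^~ z : x / k *: x}.
Proof. move=> x; exact: (linearZ_LR (opl z)). Qed.
Lemma bilinear_opZr z k : {morph op z : x / k *: x}.
Proof. move=> x; exact: (linearZ_LR (opr z)). Qed.

Definition bilinear_opE :=
  (bilinear_opDl, bilinear_opDr, bilinear_opNl, bilinear_opNr,
   bilinear_opBl, bilinear_opBr, bilinear_opZl, bilinear_opZr).
End BilinearOp.

Section LfunLinear.
Variables (F : fieldType) (aT rT : vectType F) (f : 'Hom(aT, rT)).

Lemma lfun0 : f 0 = 0. Proof. exact: linear0. Qed.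
Lemma lfunD u v : f (u + v) = f u + f v. Proof. exact: linearD. Qed.
Lemma lfunN u : f (- u) = - f u. Proof. exact: linearN. Qed.
Lemma lfunB u v : f (u - v) = f u - f v. Proof. exact: linearB. Qed.
Lemma lfunZ k u : f (k *: u) = k *: f u. Proof. exact: linearZ. Qed.

Definition lfun_linE := (lfunD, lfunN, lfunB, lfunZ).
End LfunLinear.

Lemma regular_scaleE (F : fieldType) (k x : F) : k *: (x : F^o) = k * x.
Proof. by []. Qed.

(* [ring] does not recognise the operations of F^o reached through the
   vector structure of 'Hom(A, F^o); this moves the goal back to F. *)
Lemma regular_eq (F : fieldType) (x y : F) : x = y -> x = y :> F^o.
Proof. by []. Qed.

Section DualPairing.
Variables (F : fieldType) (A : vectType F).
Local Notation D := (A * 'Hom(A, F^o))%type.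

Lemma dualopE (f : A -> A) : linear f ->
  forall (a : 'Hom(A, F^o)) u, dualop f a u = - a (f u).
Proof.
move=> lin_f a u; pose g u : F^o := - a (f u).
have lin_g : linear g by move=> k x y; rewrite /g lin_f linearP opprD -scalerN.
exact: (lfunE (HB.pack g (GRing.isLinear.Build F A F^o *:%R g lin_g))).
Qed.

Lemma dual_separates (x : A) : (forall b : 'Hom(A, F^o), b x = 0) -> x = 0.
Proof.
move=> bx0; rewrite (coord_vbasis (memvf x)) big1 // => i _.
have := bx0 (linfun (coord (vbasis fullv) i : A -> F^o)).
by rewrite lfunE /= => ->; rewrite scale0r.
Qed.

Lemma dual_pair_ext (p q : D) : p.1 = q.1 -> p.2 =1 q.2 -> p = q.
Proof. by case: p q => [x a] [y b] /= -> /lfunP ->. Qed.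

Lemma Bform_bilinear : bilinear_form (@Bform F A).
Proof.
split=> k [x a] [y b] [z c]; rewrite /Bform /= add_lfunE scale_lfunE linearP /=;
  by rewrite !regular_scaleE; ring.
Qed.

Lemma Bform_skew (p q : D) : Bform p q = - Bform q p.
Proof. by rewrite /Bform opprB. Qed.

Lemma Bform_nondegenerate (p : D) : (forall q, Bform p q = 0) -> p = 0.
Proof.
case: p => x a Bp0; have a0 : a = 0.
  apply/lfunP => u; have := Bp0 (u, 0).
  by rewrite /Bform /= !zero_lfunE subr0.
have x0 : x = 0.
  apply: dual_separates => b; have /eqP := Bp0 (0, b).
  by rewrite /Bform /= a0 zero_lfunE sub0r oppr_eq0 => /eqP.
by rewrite a0 x0.
Qed.
End DualPairing.

Section LeibnizBracket.
Variables (V : zmodType) (br : V -> V -> V).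
Hypothesis br_jacobi :
  forall x y z, br x (br y z) = br (br x y) z + br y (br x z).

Lemma leibniz_brl_skew x y z : br (br x y) z = - br (br y x) z.
Proof.
have e1 : br (br x y) z = br x (br y z) - br y (br x z) by rewrite br_jacobi addrK.
have e2 : br (br y x) z = br y (br x z) - br x (br y z) by rewrite br_jacobi addrK.
by rewrite e1 e2 opprB.
Qed.
End LeibnizBracket.

Section DualPrePoissonDouble.
Variables (F : fieldType) (A : vectType F) (circ br : A -> A -> A).
Hypotheses (circ_bil : bilinear_op circ) (br_bil : bilinear_op br).
Hypothesis circA : forall x y z, circ x (circ y z) = circ (circ x y) z.
Hypothesis circ_lcomm : forall x y z, circ (circ x y) z = circ (circ y x) z.
Hypothesis br_jacobi :
  forall x y z, br x (br y z) = br (br x y) z + br y (br x z).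
Hypothesis br_circr :
  forall x y z, br x (circ y z) = circ (br x y) z + circ y (br x z).
Hypothesis br_circl :
  forall x y z, br (circ x y) z = circ x (br y z) + circ y (br x z).
Hypothesis circ_brl_skew : forall x y z, circ (br x y) z = - circ (br y x) z.

Local Notation D := (A * 'Hom(A, F^o))%type.

Lemma circ_b_fst (p q : D) : (circ_b circ br p q).1 = circ p.1 q.1.
Proof. by []. Qed.

Lemma br_b_fst (p q : D) : (br_b circ br p q).1 = br p.1 q.1.
Proof. by []. Qed.

Lemma circ_b_snd (p q : D) u :
  (circ_b circ br p q).2 u = q.2 (circ p.1 u) + p.2 (circ q.1 u - circ u q.1).
Proof.
rewrite /circ_b /= !add_lfunE !opp_lfunE !(dualopE (bilinear_op_linr circ_bil _)).
rewrite (dualopE (bilinear_op_linl circ_bil _)) lfunB /=; apply: regular_eq; ring.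
Qed.

Lemma br_b_snd (p q : D) u :
  (br_b circ br p q).2 u = - q.2 (br p.1 u) + p.2 (br q.1 u + br u q.1).
Proof.
rewrite /br_b /= !add_lfunE !opp_lfunE !add_lfunE.
rewrite !(dualopE (bilinear_op_linr br_bil _)) (dualopE (bilinear_op_linl br_bil _)).
by rewrite lfunD /=; apply: regular_eq; ring.
Qed.

(* Otherwise simplification of the operations on pairs would unfold them
   before the four projection lemmas above can apply. *)
Opaque circ_b br_b.

Ltac expand :=
  rewrite /=;
  do ?[rewrite circ_b_fst | rewrite br_b_fst | rewrite circ_b_snd
      | rewrite br_b_snd | rewrite add_lfunE | rewrite opp_lfunE
      | rewrite scale_lfunE];
  rewrite /= ?(bilinear_opE circ_bil, bilinear_opE br_bil, lfun_linE) /=.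

Ltac close := rewrite ?regular_scaleE; apply: regular_eq; ring.

Lemma circ_b_bilinear : bilinear_op (circ_b circ br).
Proof.
split=> k [x a] [y b] [z c]; apply: dual_pair_ext => [|u]; expand; by [|close].
Qed.

Lemma br_b_bilinear : bilinear_op (br_b circ br).
Proof.
split=> k [x a] [y b] [z c]; apply: dual_pair_ext => [|u]; expand; by [|close].
Qed.

Lemma circ_b_assoc (p q r : D) :
  circ_b circ br p (circ_b circ br q r) = circ_b circ br (circ_b circ br p q) r.
Proof.
case: p q r => [x a] [y b] [z c]; apply: dual_pair_ext => [|u]; expand.
  exact: circA.
rewrite !circA (circ_lcomm y x) (circ_lcomm z x) (circ_lcomm u y).
by rewrite !(circ_lcomm z u); expand; close.
Qed.

Lemma circ_b_lcomm (p q r : D) :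
  circ_b circ br (circ_b circ br p q) r = circ_b circ br (circ_b circ br q p) r.
Proof.
case: p q r => [x a] [y b] [z c]; apply: dual_pair_ext => [|u]; expand.
  exact: circ_lcomm.
by rewrite (circ_lcomm y x) !(circ_lcomm z u); expand; close.
Qed.

Lemma br_b_jacobi (p q r : D) :
  br_b circ br p (br_b circ br q r) =
  br_b circ br (br_b circ br p q) r + br_b circ br q (br_b circ br p r).
Proof.
case: p q r => [x a] [y b] [z c]; apply: dual_pair_ext => [|u]; expand.
  exact: br_jacobi.
rewrite (br_jacobi x y u) (br_jacobi x z u) (br_jacobi x u z) (br_jacobi y z u).
by rewrite (br_jacobi y u z) (leibniz_brl_skew br_jacobi z u y); expand; close.
Qed.

Lemma br_b_circ_br (p q r : D) :
  br_b circ br p (circ_b circ br q r) =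
  circ_b circ br (br_b circ br p q) r + circ_b circ br q (br_b circ br p r).
Proof.
case: p q r => [x a] [y b] [z c]; apply: dual_pair_ext => [|u]; expand.
  exact: br_circr.
rewrite (br_circr x y u) (br_circr x z u) (br_circr x u z) (br_circl y z u).
rewrite (br_circr u y z) (br_circr y z u) (br_circl z u y) (br_circr y u z).
rewrite (br_circl u z y) (br_circr z y u) (br_circl y u z) (circ_brl_skew z y u).
by rewrite (circ_brl_skew u y z); expand; close.
Qed.

Lemma br_b_circ_bl (p q r : D) :
  br_b circ br (circ_b circ br p q) r =
  circ_b circ br p (br_b circ br q r) + circ_b circ br q (br_b circ br p r).
Proof.
case: p q r => [x a] [y b] [z c]; apply: dual_pair_ext => [|u]; expand.
  exact: br_circl.
rewrite (br_circl x y u) (br_circr y x u) (br_circr x y u) (circ_brl_skew y x u).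
rewrite (br_circr z x u) (br_circl x u z) (circ_brl_skew z x u) (br_circr z y u).
rewrite (br_circl y u z) (circ_brl_skew z y u) (circ_brl_skew u z y).
by expand; close.
Qed.

Lemma circ_b_brl_skew (p q r : D) :
  circ_b circ br (br_b circ br p q) r = - circ_b circ br (br_b circ br q p) r.
Proof.
case: p q r => [x a] [y b] [z c]; apply: dual_pair_ext => [|u]; expand.
  exact: circ_brl_skew.
rewrite (circ_brl_skew x y u) (br_circl z u x) (br_circl u z x) (br_circl z u y).
by rewrite (br_circl u z y); expand; close.
Qed.

Lemma Bform_circ_b_invariant (p q r : D) :
  Bform (circ_b circ br p q) r = Bform p (circ_b circ br q r - circ_b circ br r q).
Proof. by case: p q r => [x a] [y b] [z c]; rewrite /Bform; expand; close. Qed.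

Lemma Bform_br_b_invariant (p q r : D) :
  Bform (br_b circ br p q) r = Bform p (br_b circ br q r + br_b circ br r q).
Proof. by case: p q r => [x a] [y b] [z c]; rewrite /Bform; expand; close. Qed.

Lemma quadratic_dpp_b :
  is_quadratic_dpp (circ_b circ br) (br_b circ br) (@Bform F A).
Proof.
rewrite /is_quadratic_dpp /is_dual_pre_poisson.
repeat match goal with |- _ /\ _ => split end.
- exact: circ_b_bilinear.
- exact: br_b_bilinear.
- by move=> p q r; split; [exact: circ_b_assoc | exact: circ_b_lcomm].
- exact: br_b_jacobi.
- exact: br_b_circ_br.
- exact: br_b_circ_bl.
- exact: circ_b_brl_skew.
- exact: Bform_bilinear.
- exact: Bform_skew.
- exact: Bform_nondegenerate.
- exact: Bform_circ_b_invariant.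
- exact: Bform_br_b_invariant.
Qed.
End DualPrePoissonDouble.

Lemma dual_pre_poisson_quadratic_dpp_b (F : fieldType) (A : vectType F)
    (circ br : A -> A -> A) :
  is_dual_pre_poisson circ br ->
  is_quadratic_dpp (circ_b circ br) (br_b circ br) (@Bform F A).
Proof.
case=> circ_bil [br_bil [circA_lcomm [br_jacobi [br_circr [br_circl skew]]]]].
by apply: quadratic_dpp_b => // x y z; have [] := circA_lcomm x y z.
Qed.

Section PoissonAlgebra.
Variables (F : fieldType) (V : lmodType F) (mul br : V -> V -> V).
Hypotheses (mul_bil : bilinear_op mul) (br_bil : bilinear_op br).
Hypothesis mulA : forall x y z, mul x (mul y z) = mul (mul x y) z.
Hypothesis mulC : forall x y, mul x y = mul y x.
Hypothesis br_skew : forall x y, br x y = - br y x.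
Hypothesis br_jacobi :
  forall x y z, br x (br y z) + br y (br z x) + br z (br x y) = 0.
Hypothesis br_mulr :
  forall x y z, br x (mul y z) = mul (br x y) z + mul y (br x z).

Lemma poisson_br_leibniz x y z : br x (br y z) = br (br x y) z + br y (br x z).
Proof.
apply/eqP; rewrite -subr_eq0 -(br_jacobi x y z) (br_skew z (br x y)).
by rewrite (br_skew z x) (bilinear_opNr br_bil) opprD addrA addrAC.
Qed.

Lemma poisson_br_mull x y z : br (mul x y) z = mul x (br y z) + mul y (br x z).
Proof.
rewrite br_skew br_mulr (br_skew z x) (br_skew z y).
rewrite (bilinear_opNl mul_bil) (bilinear_opNr mul_bil) opprD !opprK.
by rewrite (mulC (br x z)) addrC.
Qed.

Lemma poisson_dual_pre_poisson : is_dual_pre_poisson mul br.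
Proof.
rewrite /is_dual_pre_poisson.
repeat match goal with |- _ /\ _ => split end.
- exact: mul_bil.
- exact: br_bil.
- by move=> x y z; split; [exact: mulA | rewrite (mulC y x)].
- exact: poisson_br_leibniz.
- exact: br_mulr.
- exact: poisson_br_mull.
- by move=> x y z; rewrite (br_skew x y) (bilinear_opNl mul_bil).
Qed.
End PoissonAlgebra.

Section PoissonDouble.
Variables (F : fieldType) (A : vectType F) (mul br : A -> A -> A).
Hypotheses (mul_bil : bilinear_op mul) (br_bil : bilinear_op br).
Hypothesis mulC : forall x y, mul x y = mul y x.
Hypothesis br_skew : forall x y, br x y = - br y x.

Lemma circ_a_circ_b : circ_a mul br =2 circ_b mul br.
Proof.
move=> p q; apply: dual_pair_ext => // u.
rewrite circ_b_snd // (mulC u) subrr lfun0 addr0 /circ_a /= opp_lfunE.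
by rewrite (dualopE (bilinear_op_linr mul_bil _)) opprK.
Qed.

Lemma br_a_br_b : br_a mul br =2 br_b mul br.
Proof.
move=> p q; apply: dual_pair_ext => // u.
rewrite br_b_snd // (br_skew u) subrr lfun0 addr0 /br_a /=.
by rewrite (dualopE (bilinear_op_linr br_bil _)).
Qed.
End PoissonDouble.

Lemma eq_is_quadratic_dpp (F : fieldType) (V : lmodType F)
    (circ circ' br br' : V -> V -> V) (B : V -> V -> F) :
  circ =2 circ' -> br =2 br' ->
  is_quadratic_dpp circ' br' B -> is_quadratic_dpp circ br B.
Proof.
move=> e_circ e_br.
have {}e_circ x y : circ x y = circ' x y := e_circ x y.
have {}e_br x y : br x y = br' x y := e_br x y.
rewrite /is_quadratic_dpp /is_dual_pre_poisson /bilinear_op.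
by repeat setoid_rewrite e_circ; repeat setoid_rewrite e_br.
Qed.

Theorem proposition2p34 (F : fieldType) (A : vectType F) :
  [pchar F] =i pred0 ->
  (forall mul br : A -> A -> A, is_poisson mul br ->
     is_quadratic_dpp (circ_a mul br) (br_a mul br) (@Bform F A)) /\
  (forall circ br : A -> A -> A, is_dual_pre_poisson circ br ->
     is_quadratic_dpp (circ_b circ br) (br_b circ br) (@Bform F A)).
Proof.
move=> _; split=> [mul br | circ br]; last exact: dual_pre_poisson_quadratic_dpp_b.
case=> mul_bil [br_bil [mulA [mulC [br_skew [br_jacobi br_mulr]]]]].
apply: (eq_is_quadratic_dpp (circ_a_circ_b br mul_bil mulC)
                            (br_a_br_b mul br_bil br_skew)).
exact/dual_pre_poisson_quadratic_dpp_b/poisson_dual_pre_poisson.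
Qed.
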